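(* Let $(\mathbf{s}_t,\mathbf{a}_t,\mathbf{s}_{t+k})\sim\mathcal{D}$ with real-valued action $\mathbf{a}_t$ of finite second moment, let $\overline{\mu}(s_t)=\mathbb{E}[\mathbf{a}_t\mid \mathbf{s}_t=s_t]$, $\overline{\xi}(s_t,s_{t+k})=\mathbb{E}[\mathbf{a}_t\mid \mathbf{s}_t=s_t,\mathbf{s}_{t+k}=s_{t+k}]$ and $$\Delta=\mathbb{E}_{\mathbf{s}_t}\Big[\mathrm{Var}_{\mathbf{s}_{t+k}\mid \mathbf{s}_t}\big(\mathbb{E}[\mathbf{a}_t\mid \mathbf{s}_t,\mathbf{s}_{t+k}]\big)\Big].$$ Let $\widehat{\mu}$ be an estimator of the BC policy obtained from a random dataset $\mathcal{D}_n$ and $\widehat{\xi}_{\widehat p}$ an estimator of the IDM policy obtained from a random dataset $\mathcal{D}_{\widehat p,m}$. Define $$\delta=\mathbb{E}_{\mathbf{s}_t}\big[\mathrm{Var}(\widehat{\mu}(\mathbf{s}_t))\big]-\mathbb{E}_{\mathbf{s}_t,\mathbf{s}_{t+k}}\big[\mathrm{Var}(\widehat{\xi}_{\widehat p}(\mathbf{s}_t,\mathbf{s}_{t+k}))\big],\qquad \beta=b_\mu^2(\widehat\mu)-b_\xi^2(\widehat\xi_{\widehat p}),$$ where the variances are over the randomness of the respective datasets and $$b_\mu^2(\widehat\mu)=\mathbb{E}_{\mathbf{s}_t}\Big[\big(\mathbb{E}_{\mathcal{D}_n}[\widehat\mu(\mathbf{s}_t)]-\overline{\mu}(\mathbf{s}_t)\big)^2\Big],\quad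 b_\xi^2(\widehat\xi_{\widehat p})=\mathbb{E}_{\mathbf{s}_t,\mathbf{s}_{t+k}}\Big[\big(\mathbb{E}_{\mathcal{D}_{\widehat p,m}}[\widehat\xi_{\widehat p}(\mathbf{s}_t,\mathbf{s}_{t+k})]-\overline{\xi}(\mathbf{s}_t,\mathbf{s}_{t+k})\big)^2\Big].$$ Then $$\widehat\Delta_{\widehat p}:=\mathrm{EPE}(\widehat\mu)-\mathrm{EPE}(\widehat\xi_{\widehat p})=\Delta+\delta+\beta.$$
   Context: Setting: an MDP with an unknown expert policy generating a data distribution $\mathcal{D}$ over tuples $(s_t,a_t,s_{t+k})$, where $s_{t+k}$ is the state $k\ge 1$ steps after $s_t$. $\widehat p(\cdot\mid s_t)$ is an approximate state predictor of the future state. The datasets are $\mathcal{D}_n=\{(s_t,a_t,s_{t+k})\stackrel{\text{i.i.d.}}{\sim}\mathcal{D}\}_{t=1}^n$ and $\mathcal{D}_{\widehat p,m}=\{(s_t,a_t,\widehat s_{t+k}) : (s_t,a_t)\stackrel{\text{i.i.d.}}{\sim}\mathcal{D},\ \widehat s_{t+k}\sim\widehat p(\cdot\mid s_t)\}_{t=1}^m$; $\mathbb{E}_{\mathcal{D}_n}$ and $\mathbb{E}_{\mathcal{D}_{\widehat p,m}}$ denote expectation over these random datasets, and the estimators are deterministic functions of their datasets, independent of the test sample. The expected prediction errors are $\mathrm{EPE}(\widehat\mu)=\mathbb{E}_{\mathbf{s}_t,\mathbf{a}_t,\mathcal{D}_n}[(\mathbf{a}_t-\widehat\mu(\mathbf{s}_t))^2]$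 and $\mathrm{EPE}(\widehat\xi_{\widehat p})=\mathbb{E}_{\mathbf{s}_t,\mathbf{a}_t,\mathbf{s}_{t+k},\mathcal{D}_{\widehat p,m}}[(\mathbf{a}_t-\widehat\xi_{\widehat p}(\mathbf{s}_t,\mathbf{s}_{t+k}))^2]$, where the test tuple $(\mathbf{s}_t,\mathbf{a}_t,\mathbf{s}_{t+k})\sim\mathcal{D}$ uses the ground-truth future state. *)

From HB Require Import structures.
From mathcomp Require Import all_boot all_order all_algebra.
From mathcomp Require Import all_classical all_reals all_analysis.
Set Implicit Arguments. Unset Strict Implicit. Unset Printing Implicit Defensive.
Import Order.TTheory GRing.Theory Num.Theory.
Import numFieldNormedType.Exports.
Local Open Scope classical_set_scope.
Local Open Scope ring_scope.

Section Defs.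
Context {R : realType}.

Definition Ex {d} {T : measurableType d} (P : probability T R) (f : T -> R) : R :=
  Rintegral P setT f.

Definition Var {d} {T : measurableType d} (P : probability T R) (f : T -> R) : R :=
  Ex P (fun w => (f w - Ex P f) ^+ 2).

Definition cond_exp_version {d} {Om : measurableType d} (P : probability Om R)
  {dT} {T : measurableType dT} (X : Om -> R) (Y : Om -> T) (g : T -> R) : Prop :=
  [/\ measurable_fun setT g,
      P.-integrable setT (fun w => (g (Y w))%:E) &
      forall h : T -> R, measurable_fun setT h ->
        (exists M : R, forall t, `|h t| <= M) ->
        (\int[P]_w (X w * h (Y w))%:E = \int[P]_w (g (Y w) * h (Y w))%:E)%E].

End Defs.

From HB Require Import structures.
From mathcomp Require Import all_boot all_order all_algebra.
From mathcomp Require Import all_classical all_reals all_analysis.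
From mathcomp Require Import measurable_realfun ring lra.
Import Order.TTheory GRing.Theory Num.Theory.
Import numFieldNormedType.Exports.
Local Open Scope classical_set_scope.
Local Open Scope ring_scope.

Set Implicit Arguments. Unset Strict Implicit. Unset Printing Implicit Defensive.

(* Averaging the squared error of an estimator over its training set splits it,
   for each test tuple, into the squared distance to the mean prediction plus
   the variance of the prediction.  A conditional expectation E[a | Y] is the
   orthogonal projection of a onto the square-integrable functions of Y, so by
   Pythagoras the squared distance from a to a mean prediction depending on Y
   is the irreducible error E[(a - E[a | Y])^2] plus the squared bias.  Since
   s_t is a function of (s_t, s_{t+k}), Pythagoras once more identifies the
   gap between the two irreducible errors with
   E[(xibar - E[xibar | s_t])^2] = Delta. *)

Section Rintegrable.
Context {R : realType} {d : measure_display} {T : measurableType d}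
  (P : probability T R).
Implicit Types (f g : T -> R) (k r : R).

Definition Rintegrable f := P.-integrable setT (fun x => (f x)%:E).

Definition sqr_integrable f :=
  measurable_fun setT f /\ Rintegrable (fun x => f x ^+ 2).

Lemma Rintegrable_measurable f : Rintegrable f -> measurable_fun setT f.
Proof. by move=> /integrableP[/measurable_EFinP]. Qed.

Lemma Rintegrable_cst r : Rintegrable (fun _ => r).
Proof. exact: (finite_measure_integrable_cst P r measurableT). Qed.

Lemma RintegrableD f g : Rintegrable f -> Rintegrable g ->
  Rintegrable (fun x => f x + g x).
Proof.
by move=> If Ig; rewrite /Rintegrable; under eq_fun do rewrite EFinD; exact: integrableD.
Qed.

Lemma RintegrableB f g : Rintegrable f -> Rintegrable g ->
  Rintegrable (fun x => f x - g x).
Proof.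
by move=> If Ig; rewrite /Rintegrable; under eq_fun do rewrite EFinB; exact: integrableB.
Qed.

Lemma RintegrableZ k f : Rintegrable f -> Rintegrable (fun x => k * f x).
Proof.
by move=> If; rewrite /Rintegrable; under eq_fun do rewrite EFinM; exact: integrableZl.
Qed.

Lemma Rintegrable_le f g : measurable_fun setT f -> Rintegrable g ->
  (forall x, `|f x| <= `|g x|) -> Rintegrable f.
Proof.
move=> mf Ig fg; apply: (le_integrable measurableT _ _ Ig).
  exact/measurable_EFinP.
by move=> x _; rewrite !abse_EFin lee_fin fg.
Qed.

Lemma Rintegrable_ae_le f g : measurable_fun setT f -> Rintegrable g ->
  (forall x, 0 <= f x) -> (\forall x \ae P, f x <= g x) -> Rintegrable f.
Proof.
move=> mf Ig f0 fg; apply/integrableP; split; first exact/measurable_EFinP.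
apply: le_lt_trans (integrableP _ _ _ Ig).2.
have mg := Rintegrable_measurable Ig.
apply: ae_ge0_le_integral => //.
- by apply: measurableT_comp => //; exact/measurable_EFinP.
- by apply: measurableT_comp => //; exact/measurable_EFinP.
apply: filterS fg => x fgx _; rewrite !abse_EFin lee_fin ger0_norm ?f0 //.
exact: le_trans fgx (ler_norm _).
Qed.

Lemma sqr_integrable_measurable f : sqr_integrable f -> measurable_fun setT f.
Proof. by case. Qed.

Lemma sqr_integrable_sqr f : sqr_integrable f -> Rintegrable (fun x => f x ^+ 2).
Proof. by case. Qed.

Lemma sqr_integrable_Rintegrable f : sqr_integrable f -> Rintegrable f.
Proof.
move=> [mf If2]; apply: (Rintegrable_le (g := fun x => 1 + f x ^+ 2)) => //.
  exact: RintegrableD (Rintegrable_cst 1) If2.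
move=> x; rewrite [X in _ <= X]ger0_norm ?addr_ge0 ?sqr_ge0 //.
rewrite -real_normK ?num_real //; have := sqr_ge0 (`|f x| - 1); nra.
Qed.

Lemma Rintegrable_mul f g : sqr_integrable f -> sqr_integrable g ->
  Rintegrable (fun x => f x * g x).
Proof.
move=> [mf If2] [mg Ig2].
apply: (Rintegrable_le (g := fun x => f x ^+ 2 + g x ^+ 2)).
- exact: measurable_funM.
- exact: RintegrableD.
move=> x; rewrite [X in _ <= X]ger0_norm ?addr_ge0 ?sqr_ge0 //.
rewrite normrM -(real_normK (num_real (f x))) -(real_normK (num_real (g x))).
have := sqr_ge0 (`|f x| - `|g x|); nra.
Qed.

Lemma sqr_integrable_cst r : sqr_integrable (fun _ => r).
Proof. by split; [exact: measurable_cst | exact: Rintegrable_cst]. Qed.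

Lemma sqr_integrableB f g : sqr_integrable f -> sqr_integrable g ->
  sqr_integrable (fun x => f x - g x).
Proof.
move=> Lf Lg; have mf := sqr_integrable_measurable Lf.
have mg := sqr_integrable_measurable Lg.
split; first exact: measurable_funB.
apply: (Rintegrable_le (g := fun x => 2 * f x ^+ 2 + 2 * g x ^+ 2)).
- exact/measurable_funX/measurable_funB.
- by apply: RintegrableD; apply: RintegrableZ; exact: sqr_integrable_sqr.
have sqr2_ge0 (y : R) : 0 <= 2 * y ^+ 2 by rewrite mulr_ge0 ?sqr_ge0.
move=> x; rewrite !ger0_norm ?sqr_ge0 ?addr_ge0 ?sqr2_ge0 //.
have := sqr_ge0 (f x + g x); nra.
Qed.

Lemma sqr_integrable_bounded f M : measurable_fun setT f ->
  (forall x, `|f x| <= M) -> sqr_integrable f.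
Proof.
move=> mf fM; split => //.
apply: (Rintegrable_le (g := fun _ => M ^+ 2)).
- exact: measurable_funX.
- exact: Rintegrable_cst.
move=> x; rewrite !ger0_norm ?sqr_ge0 // -real_normK ?num_real //.
have := fM x; have := normr_ge0 (f x); nra.
Qed.

End Rintegrable.

Section Expectation.
Context {R : realType} {d : measure_display} {T : measurableType d}
  (P : probability T R).
Implicit Types (f g : T -> R) (a k r : R).

Lemma eq_Ex f g : f =1 g -> Ex P f = Ex P g.
Proof. by move=> fg; apply: eq_Rintegral => x _; rewrite fg. Qed.

Lemma ExD f g : Rintegrable P f -> Rintegrable P g ->
  Ex P (fun x => f x + g x) = Ex P f + Ex P g.
Proof. by move=> If Ig; rewrite /Ex RintegralD. Qed.

Lemma ExB f g : Rintegrable P f -> Rintegrable P g ->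
  Ex P (fun x => f x - g x) = Ex P f - Ex P g.
Proof. by move=> If Ig; rewrite /Ex RintegralB. Qed.

Lemma ExZ k f : Rintegrable P f -> Ex P (fun x => k * f x) = k * Ex P f.
Proof. by move=> If; rewrite /Ex RintegralZl. Qed.

Lemma Ex_cst r : Ex P (fun _ => r) = r.
Proof.
rewrite /Ex Rintegral_cst //.
transitivity (r * fine (1%E : \bar R)); last by rewrite mulr1.
by congr (_ * fine _); exact: probability_setT.
Qed.


Lemma Ex_ge0 f : (forall x, 0 <= f x) -> 0 <= Ex P f.
Proof. by move=> f0; apply: Rintegral_ge0 => x _; exact: f0. Qed.

Lemma EFin_Ex f : Rintegrable P f -> (\int[P]_x (f x)%:E)%E = (Ex P f)%:E.
Proof. by move=> If; rewrite /Ex /Rintegral fineK //; exact: integrable_fin_num. Qed.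

Lemma ae_eq_Ex f g : measurable_fun setT f -> measurable_fun setT g ->
  (\forall x \ae P, f x = g x) -> Ex P f = Ex P g.
Proof.
move=> mf mg fg; rewrite /Ex /Rintegral (ae_eq_integral (fun x => (g x)%:E)) //.
- exact/measurable_EFinP.
- exact/measurable_EFinP.
- by apply: filterS fg => x fgx _; rewrite fgx.
Qed.

Lemma Ex_sqrB f g : sqr_integrable P f -> sqr_integrable P g ->
  Ex P (fun x => (f x - g x) ^+ 2) =
  Ex P (fun x => f x ^+ 2) - 2 * Ex P (fun x => f x * g x) + Ex P (fun x => g x ^+ 2).
Proof.
move=> Lf Lg; have If2 := sqr_integrable_sqr Lf; have Ig2 := sqr_integrable_sqr Lg.
have Ifg := Rintegrable_mul Lf Lg.
rewrite (eq_Ex (g := fun x => (f x ^+ 2 - 2 * (f x * g x)) + g x ^+ 2)); last first.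
  by move=> x; rewrite sqrrB; ring.
have I2fg : Rintegrable P (fun x => 2 * (f x * g x)) by exact: RintegrableZ.
by rewrite ExD ?ExB ?ExZ //; exact: RintegrableB.
Qed.

Lemma Ex_sqr_subC f g :
  Ex P (fun x => (f x - g x) ^+ 2) = Ex P (fun x => (g x - f x) ^+ 2).
Proof. by apply: eq_Ex => x; rewrite -sqrrN opprB. Qed.

Lemma VarE f : sqr_integrable P f -> Var P f = Ex P (fun x => f x ^+ 2) - Ex P f ^+ 2.
Proof.
move=> Lf; rewrite /Var Ex_sqrB ?Ex_cst //; last exact: sqr_integrable_cst.
rewrite (@eq_Ex (fun x => f x * Ex P f) (fun x => Ex P f * f x)) => [|x]; last first.
  by rewrite mulrC.
by rewrite ExZ; [ring | exact: sqr_integrable_Rintegrable].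
Qed.

Lemma Ex_sqr_bias_variance a f : sqr_integrable P f ->
  Ex P (fun x => (a - f x) ^+ 2) = (a - Ex P f) ^+ 2 + Var P f.
Proof.
move=> Lf; rewrite Ex_sqrB ?Ex_cst ?ExZ ?VarE //; first ring.
- exact: sqr_integrable_Rintegrable.
- exact: sqr_integrable_cst.
Qed.

Lemma sqr_Ex_le f : sqr_integrable P f -> Ex P f ^+ 2 <= Ex P (fun x => f x ^+ 2).
Proof. by move=> Lf; rewrite -subr_ge0 -VarE //; apply: Ex_ge0 => x; exact: sqr_ge0. Qed.

End Expectation.

Section Truncation.
Context {R : realType} {d : measure_display} {S : measurableType d}.
Implicit Types (h : S -> R) (n : nat) (t : S).

Definition truncation h n t : R := h t * \1_[set t | `|h t| <= n%:R] t.

Lemma truncationE h n t : truncation h n t = if `|h t| <= n%:R then h t else 0.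
Proof.
rewrite /truncation indicE; have [hn|hn] := boolP (`|h t| <= n%:R).
  by rewrite mem_set // mulr1.
by rewrite memNset ?mulr0 // => /= hn'; move/negP: hn; apply.
Qed.

Lemma measurable_truncation h n : measurable_fun setT h ->
  measurable_fun setT (truncation h n).
Proof.
move=> mh; apply: measurable_funM => //; apply: measurable_indic.
have -> : [set t | `|h t| <= n%:R] = setT `&` h @^-1` `[- n%:R, n%:R]%classic.
  by apply/seteqP; split => t /=; rewrite in_itv /= -ler_norml => // [[]].
exact: mh.
Qed.

Lemma truncation_bounded h n t : `|truncation h n t| <= n%:R.
Proof. by rewrite truncationE; case: ifP => // _; rewrite normr0. Qed.

Lemma truncation_le h n t : `|truncation h n t| <= `|h t|.
Proof. by rewrite truncationE; case: ifP => // _; rewrite normr0. Qed.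

Lemma mul_truncation h n t : h t * truncation h n t = truncation h n t ^+ 2.
Proof. by rewrite truncationE; case: ifP => _; rewrite ?mulr0 ?expr2 // mul0r. Qed.

Lemma truncation_sqr_nondecreasing h t :
  {homo (fun n => ((truncation h n t) ^+ 2)%:E : \bar R) :
    n m / (n <= m)%N >-> (n <= m)%E}.
Proof.
move=> n m nm; rewrite lee_fin !truncationE.
case: ifP => hn; case: ifP => hm //.
- by move: hm; rewrite (le_trans hn) // ler_nat.
- by rewrite expr0n /= sqr_ge0.
Qed.

Lemma truncation_near h t : \forall n \near \oo, truncation h n t = h t.
Proof.
have /ltW hb := archi_boundP (normr_ge0 (h t)).
exists (Num.Def.archi_bound `|h t|) => // n /= hn.
by rewrite truncationE (le_trans hb) // ler_nat.
Qed.

End Truncation.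

(* cond_exp_version only tests against bounded functions: the proofs below
   test against truncations and remove them by monotone, resp. dominated,
   convergence. *)
Section ConditionalExpectation.
Context {R : realType} {d : measure_display} {T : measurableType d}
  (P : probability T R) {dS : measure_display} {S : measurableType dS}
  (X : T -> R) (Y : T -> S) (g : S -> R).
Hypothesis ce : cond_exp_version P X Y g.

Lemma Ex_ce : Ex P X = Ex P (fun w => g (Y w)).
Proof.
case: ce => _ _ /(_ (fun _ => 1) (measurable_cst _)) ce1.
have /ce1 : exists M : R, forall t : S, `|1| <= M by exists 1 => t; rewrite normr1.
under eq_integral do rewrite mulr1.
under [X in (_ = X)%E -> _]eq_integral do rewrite mulr1.
by rewrite /Ex /Rintegral => ->.
Qed.

Hypotheses (mY : measurable_fun setT Y) (LX : sqr_integrable P X).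

Let mg : measurable_fun setT g. Proof. by case: ce. Qed.

Let ce_truncation h n : measurable_fun setT h ->
  (\int[P]_w (X w * truncation h n (Y w))%:E =
   \int[P]_w (g (Y w) * truncation h n (Y w))%:E)%E.
Proof.
case: ce => _ _ ceh mh; apply: ceh; first exact: measurable_truncation.
by exists n%:R => t; exact: truncation_bounded.
Qed.

Let sqr_integrable_truncation n :
  sqr_integrable P (fun w => truncation g n (Y w)).
Proof.
apply: (@sqr_integrable_bounded _ _ _ _ _ n%:R); last exact: truncation_bounded.
by apply: measurableT_comp => //; exact: measurable_truncation.
Qed.

Let Ex_truncation_sqr_le n :
  Ex P (fun w => truncation g n (Y w) ^+ 2) <= Ex P (fun w => X w ^+ 2).
Proof.
have XgnE : Ex P (fun w => X w * truncation g n (Y w)) =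
            Ex P (fun w => truncation g n (Y w) ^+ 2).
  rewrite /Ex /Rintegral ce_truncation //; congr fine.
  by apply: eq_integral => w _; rewrite mul_truncation.
have := Ex_sqrB LX (sqr_integrable_truncation n); rewrite XgnE.
have := Ex_ge0 P (fun w => sqr_ge0 (X w - truncation g n (Y w))).
lra.
Qed.

Lemma sqr_integrable_ce : sqr_integrable P (fun w => g (Y w)).
Proof.
have mgY : measurable_fun setT (fun w => g (Y w)) := measurableT_comp mg mY.
split => //; apply/integrableP; split.
  exact/measurable_EFinP/(measurable_funX 2 mgY).
rewrite (eq_integral (fun w => ((g (Y w)) ^+ 2)%:E)); last first.
  by move=> w _; rewrite abse_EFin ger0_norm // sqr_ge0.
pose gn n w := ((truncation g n (Y w)) ^+ 2)%:E : \bar R.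
have mgn n : measurable_fun setT (gn n).
  apply/measurable_EFinP/(measurable_funX 2)/measurableT_comp => //.
  exact: measurable_truncation.
have gn_ge0 n w : setT w -> (0 <= gn n w)%E by rewrite lee_fin sqr_ge0.
have gn_lim w : limn (gn^~ w) = ((g (Y w)) ^+ 2)%:E.
  apply: lim_near_cst => //; near=> n.
  by rewrite /gn (near (truncation_near g (Y w)) n).
have cvg_gn := cvg_monotone_convergence (mu := P) measurableT mgn gn_ge0
  (fun w _ => truncation_sqr_nondecreasing g (Y w)).
rewrite (eq_integral (fun w => limn (gn^~ w))); last by move=> w _; rewrite gn_lim.
rewrite -(cvg_lim _ cvg_gn) //.
apply: le_lt_trans (ltry (Ex P (fun w => X w ^+ 2))).
apply: lime_le; first exact: cvgP cvg_gn.
apply: nearW => n; rewrite EFin_Ex ?lee_fin; first exact: Ex_truncation_sqr_le.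
exact: sqr_integrable_sqr (sqr_integrable_truncation n).
Unshelve. all: end_near.
Qed.

Section Orthogonality.
Variable h : S -> R.
Hypotheses (mh : measurable_fun setT h) (Lh : sqr_integrable P (fun w => h (Y w))).

Let cvg_integral_truncation (Z : T -> R) : sqr_integrable P Z ->
  (\int[P]_w (Z w * truncation h n (Y w))%:E)%E @[n --> \oo] -->
  (\int[P]_w (Z w * h (Y w))%:E)%E.
Proof.
move=> LZ; have mZ := sqr_integrable_measurable LZ.
have mZhn n : measurable_fun setT (fun w => (Z w * truncation h n (Y w))%:E).
  apply/measurable_EFinP/measurable_funM => //.
  by apply: measurableT_comp => //; exact: measurable_truncation.
have mZh : measurable_fun setT (fun w => (Z w * h (Y w))%:E).
  exact/measurable_EFinP/measurable_funM/measurableT_comp.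
have Zhn_cvg : \forall w \ae P, setT w ->
    (Z w * truncation h n (Y w))%:E @[n --> \oo] --> (Z w * h (Y w))%:E.
  apply: aeW => w _; apply: cvg_near_cst; near=> n.
  by rewrite (near (truncation_near h (Y w)) n).
have iZh : P.-integrable setT (abse \o (fun w => (Z w * h (Y w))%:E)).
  exact/integrable_abse/(Rintegrable_mul LZ Lh).
have Zhn_le : \forall w \ae P, forall n, setT w ->
    (`|(Z w * truncation h n (Y w))%:E| <= `|(Z w * h (Y w))%:E|)%E.
  apply: aeW => w n _; rewrite !abse_EFin lee_fin normrM [leRHS]normrM.
  by rewrite ler_wpM2l //; exact: truncation_le.
by case: (dominated_convergence measurableT mZhn mZh Zhn_cvg iZh Zhn_le).
Unshelve. all: end_near.
Qed.

Lemma ce_orthogonal :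
  Ex P (fun w => X w * h (Y w)) = Ex P (fun w => g (Y w) * h (Y w)).
Proof.
have cvgX := cvg_integral_truncation LX.
have cvggY := cvg_integral_truncation sqr_integrable_ce.
have XgE : (fun n => \int[P]_w (X w * truncation h n (Y w))%:E)%E =
           (fun n => \int[P]_w (g (Y w) * truncation h n (Y w))%:E)%E.
  by apply: funext => n; exact: ce_truncation.
by rewrite XgE in cvgX; rewrite /Ex /Rintegral (cvg_unique _ cvgX cvggY).
Qed.

End Orthogonality.

Lemma ce_pythagoras (h : S -> R) : measurable_fun setT h ->
  sqr_integrable P (fun w => h (Y w)) ->
  Ex P (fun w => (X w - h (Y w)) ^+ 2) =
  Ex P (fun w => (X w - g (Y w)) ^+ 2) + Ex P (fun w => (h (Y w) - g (Y w)) ^+ 2).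
Proof.
move=> mh Lh; have LgY := sqr_integrable_ce.
have ggE : Ex P (fun w => g (Y w) * g (Y w)) = Ex P (fun w => g (Y w) ^+ 2).
  by apply: eq_Ex => w; rewrite expr2.
have hgE : Ex P (fun w => h (Y w) * g (Y w)) = Ex P (fun w => g (Y w) * h (Y w)).
  by apply: eq_Ex => w; rewrite mulrC.
rewrite !Ex_sqrB // (ce_orthogonal mh Lh) (ce_orthogonal mg LgY) ggE hgE.
ring.
Qed.

End ConditionalExpectation.

(* The four projection identities in the proof force E[(g1 - c)^2] = 0,
   which is the tower property c = g1 a.e. *)
Lemma ce_nested_gap {R : realType} {d : measure_display} {T : measurableType d}
    (P : probability T R) {d1 d2 : measure_display}
    {S1 : measurableType d1} {S2 : measurableType d2}
    (X : T -> R) (Y2 : T -> S2) (f : S2 -> S1) (g1 c : S1 -> R) (g2 : S2 -> R) :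
  measurable_fun setT Y2 -> measurable_fun setT f -> sqr_integrable P X ->
  cond_exp_version P X (fun w => f (Y2 w)) g1 ->
  cond_exp_version P X Y2 g2 ->
  cond_exp_version P (fun w => g2 (Y2 w)) (fun w => f (Y2 w)) c ->
  Ex P (fun w => (X w - g1 (f (Y2 w))) ^+ 2) =
  Ex P (fun w => (X w - g2 (Y2 w)) ^+ 2) +
  Ex P (fun w => (g2 (Y2 w) - c (f (Y2 w))) ^+ 2).
Proof.
move=> mY2 mf LX ce1 ce2 cec.
have mY1 : measurable_fun setT (fun w => f (Y2 w)) := measurableT_comp mf mY2.
have Lg1 := sqr_integrable_ce ce1 mY1 LX.
have Lg2 := sqr_integrable_ce ce2 mY2 LX.
have Lc := sqr_integrable_ce cec mY1 Lg2.
have mg1 : measurable_fun setT g1 by case: ce1.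
have mc : measurable_fun setT c by case: cec.
have := ce_pythagoras ce2 mY2 LX (measurableT_comp mg1 mf) Lg1.
have := ce_pythagoras cec mY1 Lg2 mg1 Lg1.
have := ce_pythagoras ce1 mY1 LX mc Lc.
have := ce_pythagoras ce2 mY2 LX (measurableT_comp mc mf) Lc.
rewrite (Ex_sqr_subC P (fun w => g1 (f (Y2 w))) (fun w => g2 (Y2 w))).
rewrite (Ex_sqr_subC P (fun w => c (f (Y2 w))) (fun w => g1 (f (Y2 w)))).
rewrite (Ex_sqr_subC P (fun w => c (f (Y2 w))) (fun w => g2 (Y2 w))).
lra.
Qed.

Section PartialExpectation.
Context {R : realType} {d1 : measure_display} {T1 : measurableType d1}
  {d2 : measure_display} {T2 : measurableType d2} (Q : probability T2 R).

Lemma measurable_Ex_partial (F : T1 * T2 -> R) : measurable_fun setT F ->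
  measurable_fun setT (fun t => Ex Q (fun x => F (t, x))).
Proof.
move=> mF; have mFe : measurable_fun setT (EFin \o F) by exact/measurable_EFinP.
have mp := measurable_fun_fubini_tonelli_F (m2 := Q) _ (measurable_funepos mFe)
  (funepos_ge0 _).
have mn := measurable_fun_fubini_tonelli_F (m2 := Q) _ (measurable_funeneg mFe)
  (funeneg_ge0 _).
have -> : (fun t => Ex Q (fun x => F (t, x))) = fun t =>
    fine (fubini_F Q (EFin \o F)^\+ t - fubini_F Q (EFin \o F)^\- t)%E.
  apply: funext => t; rewrite /Ex /Rintegral integralE /fubini_F.
  by congr (fine (_ - _)); apply: eq_integral => x _; rewrite ?funeposE ?funenegE.
exact: measurableT_comp (fine_measurable measurableT) (emeasurable_funB mp mn).
Qed.

End PartialExpectation.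

Section Estimator.
Context {R : realType} {d : measure_display} {T : measurableType d}
  (P : probability T R) {dD : measure_display} {D : measurableType dD}
  (Q : probability D R) {dS : measure_display} {S : measurableType dS}
  (Y : T -> S) (G : D -> S -> R).
Hypotheses (mY : measurable_fun setT Y)
  (mG : measurable_fun setT (fun p : D * S => G p.1 p.2))
  (iG : (P \x Q)%E.-integrable setT (fun p => ((G p.2 (Y p.1)) ^+ 2)%:E)).

Lemma measurable_mean_estimate : measurable_fun setT (fun s => Ex Q (fun x => G x s)).
Proof.
apply: (measurable_Ex_partial Q (F := fun p : S * D => G p.2 p.1)).
exact: measurableT_comp mG (measurable_fun_pair measurable_snd measurable_fst).
Qed.

Let mGY : measurable_fun setT (fun p : T * D => G p.2 (Y p.1)).
Proof.
apply: measurableT_comp mG (measurable_fun_pair measurable_snd _).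
exact: measurableT_comp mY measurable_fst.
Qed.

Let ae_sqr_integrable : \forall z \ae P, sqr_integrable Q (fun x => G x (Y z)).
Proof.
apply: filterS (ae_integrable1 iG) => z iGz; split => //.
exact: (measurable_fun_pair2 z mGY).
Qed.

Let Rintegrable_second_moment :
  Rintegrable P (fun z => Ex Q (fun x => G x (Y z) ^+ 2)).
Proof.
apply: (le_integrable measurableT _ _ (integrable_fubini_F iG)).
  apply/measurable_EFinP.
  exact: measurableT_comp (fine_measurable measurableT) (measurable_fubini_F iG).
move=> z _; rewrite /Ex /Rintegral /fubini_F /=.
case: (\int[Q]_x _)%E => [r| |] /=; by rewrite ?leey ?lexx.
Qed.

Lemma sqr_integrable_mean_estimate :
  sqr_integrable P (fun z => Ex Q (fun x => G x (Y z))).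
Proof.
split; first exact: measurableT_comp measurable_mean_estimate mY.
apply: (Rintegrable_ae_le _ Rintegrable_second_moment).
- exact/measurable_funX/(measurableT_comp measurable_mean_estimate).
- by move=> z; exact: sqr_ge0.
- by apply: filterS ae_sqr_integrable => z; exact: sqr_Ex_le.
Qed.

Lemma Ex_Ex_sqr_bias_variance (y : T -> R) : sqr_integrable P y ->
  Ex P (fun z => Ex Q (fun x => (y z - G x (Y z)) ^+ 2)) =
  Ex P (fun z => (y z - Ex Q (fun x => G x (Y z))) ^+ 2) +
  Ex P (fun z => Var Q (fun x => G x (Y z))).
Proof.
move=> Ly; have Lm := sqr_integrable_mean_estimate.
have mm : measurable_fun setT (fun p : T * D => Ex Q (fun x => G x (Y p.1))).
  exact: measurableT_comp (sqr_integrable_measurable Lm) measurable_fst.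
have my : measurable_fun setT (fun p : T * D => y p.1).
  exact: measurableT_comp (sqr_integrable_measurable Ly) measurable_fst.
have mVar : measurable_fun setT (fun z => Var Q (fun x => G x (Y z))).
  apply: (measurable_Ex_partial Q
    (F := fun p => (G p.2 (Y p.1) - Ex Q (fun x => G x (Y p.1))) ^+ 2)).
  exact/measurable_funX/measurable_funB.
have IVar : Rintegrable P (fun z => Var Q (fun x => G x (Y z))).
  apply: (Rintegrable_ae_le mVar Rintegrable_second_moment).
    by move=> z; apply: Ex_ge0 => x; exact: sqr_ge0.
  apply: filterS ae_sqr_integrable => z Lz.
  by rewrite VarE // lerBlDr lerDl sqr_ge0.
have Ibias := sqr_integrable_sqr (sqr_integrableB Ly Lm).
rewrite -ExD //.
apply: ae_eq_Ex.
- apply: (measurable_Ex_partial Q (F := fun p => (y p.1 - G p.2 (Y p.1)) ^+ 2)).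
  exact/measurable_funX/measurable_funB.
- exact: measurable_funD (Rintegrable_measurable Ibias) (Rintegrable_measurable IVar).
- apply: filterS ae_sqr_integrable => z Lz; exact: Ex_sqr_bias_variance.
Qed.

End Estimator.

Theorem corollary1 (R : realType)
  (dS : measure_display) (TS : measurableType dS)
  (D : probability ((TS * R) * TS)%type R)
  (dN : measure_display) (XN : measurableType dN) (PN : probability XN R)
  (dM : measure_display) (XM : measurableType dM) (PM : probability XM R)
  (muhat : XN -> TS -> R) (xihat : XM -> TS -> TS -> R)
  (mubar : TS -> R) (xibar : TS * TS -> R) (c v : TS -> R) :
  (* finite second moment of the action *)
  D.-integrable setT (fun z => (z.1.2 ^+ 2)%:E) ->
  (* estimators: jointly measurable with finite second moments *)
  measurable_fun setT (fun p : XN * TS => muhat p.1 p.2) ->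
  (D \x PN)%E.-integrable setT (fun p => ((muhat p.2 p.1.1.1) ^+ 2)%:E) ->
  measurable_fun setT (fun p : XM * (TS * TS) => xihat p.1 p.2.1 p.2.2) ->
  (D \x PM)%E.-integrable setT (fun p => ((xihat p.2 p.1.1.1 p.1.2) ^+ 2)%:E) ->
  (* mubar(s) = E[a_t | s_t = s] *)
  cond_exp_version D (fun z => z.1.2) (fun z => z.1.1) mubar ->
  (* xibar(s, s') = E[a_t | s_t = s, s_{t+k} = s'] *)
  cond_exp_version D (fun z => z.1.2) (fun z => (z.1.1, z.2)) xibar ->
  (* c(s) = E[xibar(s_t, s_{t+k}) | s_t = s] *)
  cond_exp_version D (fun z => xibar (z.1.1, z.2)) (fun z => z.1.1) c ->
  (* v(s) = Var_{s_{t+k} | s_t = s}(xibar(s_t, s_{t+k})) *)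
  cond_exp_version D (fun z => (xibar (z.1.1, z.2) - c z.1.1) ^+ 2) (fun z => z.1.1) v ->
  let EPE_mu := Ex D (fun z => Ex PN (fun d => (z.1.2 - muhat d z.1.1) ^+ 2)) in
  let EPE_xi := Ex D (fun z => Ex PM (fun d => (z.1.2 - xihat d z.1.1 z.2) ^+ 2)) in
  let Delta := Ex D (fun z => v z.1.1) in
  let delta := Ex D (fun z => Var PN (fun d => muhat d z.1.1))
             - Ex D (fun z => Var PM (fun d => xihat d z.1.1 z.2)) in
  let b2_mu := Ex D (fun z => (Ex PN (fun d => muhat d z.1.1) - mubar z.1.1) ^+ 2) in
  let b2_xi := Ex D (fun z => (Ex PM (fun d => xihat d z.1.1 z.2) - xibar (z.1.1, z.2)) ^+ 2) in
  let beta := b2_mu - b2_xi in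
  EPE_mu - EPE_xi = Delta + delta + beta.
Proof.
move=> a2 mmu imu mxi ixi ce_mu ce_xi ce_c ce_v; cbv zeta.
have mY1 : measurable_fun setT (fun z : (TS * R) * TS => z.1.1).
  exact: measurableT_comp measurable_fst measurable_fst.
have mY2 : measurable_fun setT (fun z : (TS * R) * TS => (z.1.1, z.2)).
  exact: measurable_fun_pair mY1 measurable_snd.
have La : sqr_integrable D (fun z : (TS * R) * TS => z.1.2).
  by split => //; exact: measurableT_comp measurable_snd measurable_fst.
pose xihat' (d : XM) (s : TS * TS) := xihat d s.1 s.2.
have mxi' : measurable_fun setT (fun p : XM * (TS * TS) => xihat' p.1 p.2) by [].
rewrite (Ex_Ex_sqr_bias_variance mY1 mmu imu La).
rewrite (Ex_Ex_sqr_bias_variance (G := xihat') mY2 mxi' ixi La).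
rewrite (ce_pythagoras ce_mu mY1 La (measurable_mean_estimate _ mmu)
  (sqr_integrable_mean_estimate mY1 mmu imu)).
rewrite (ce_pythagoras ce_xi mY2 La (measurable_mean_estimate _ mxi')
  (sqr_integrable_mean_estimate (G := xihat') mY2 mxi' ixi)).
rewrite (ce_nested_gap mY2 measurable_fst La ce_mu ce_xi ce_c) -(Ex_ce ce_v).
ring.
Qed.
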